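(* Let $m=2k$ with $k\in\mathbb{N}$. For every $\beta\in(k+1,m+1]$ there exists $x\in(0,\frac{m}{\beta-1})$ with a unique $\beta$-expansion, i.e. $|\Sigma_{\beta,m}(x)|=1$.
   Context: $\Sigma_{\beta,m}(x)=\{(\epsilon_i)_{i=1}^\infty\in\{0,\ldots,m\}^{\mathbb{N}}:\sum_{i\ge1}\epsilon_i\beta^{-i}=x\}$; its elements are the $\beta$-expansions of $x$. *)

From Stdlib Require Import Reals.
From Coquelicot Require Import Coquelicot.
Open Scope R_scope.

(* A beta-expansion of x with digits in {0,...,m}: eps : nat -> nat, where
   eps i stands for epsilon_{i+1}, and sum_{i>=0} eps i * beta^{-(i+1)} = x. *)
Definition is_beta_expansion (beta : R) (m : nat) (x : R) (eps : nat -> nat) : Prop :=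
  (forall i, (eps i <= m)%nat) /\
  is_series (fun i => INR (eps i) / beta ^ (S i)) x.

Definition Sigma (beta : R) (m : nat) (x : R) : (nat -> nat) -> Prop :=
  fun eps => is_beta_expansion beta m x eps.

Definition unique_expansion (beta : R) (m : nat) (x : R) : Prop :=
  exists eps, Sigma beta m x eps /\
    forall eps', Sigma beta m x eps' -> forall i, eps' i = eps i.

(* The point is x = k/(beta - 1), which has the constant expansion k k k ....
   Every expansion of a value y lies in [0, m/(beta - 1)] = [0, 2x], and stripping the
   first digit d of an expansion of y leaves an expansion of beta*y - d.  For y = x this
   remainder is x + (k - d); since x < 1 (as beta > k + 1), any digit d <> k pushes the
   remainder out of [0, 2x].  So the first digit is k, the remainder is x again, and by
   induction every digit equals k. *)

From Stdlib Require Import Reals Lra Lia.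
From Coquelicot Require Import Coquelicot.
Open Scope R_scope.

Lemma is_series_const_digits (beta c : R) : 1 < beta ->
  is_series (fun i => c / beta ^ (S i)) (c / (beta - 1)).
Proof.
  intros Hbeta.
  assert (Hq : Rabs (/ beta) < 1).
  { rewrite Rabs_pos_eq by (left; apply Rinv_0_lt_compat; lra).
    rewrite <- Rinv_1; apply Rinv_lt_contravar; lra. }
  eapply is_series_ext;
    [| replace (c / (beta - 1)) with (scal (c / beta) (/ (1 - / beta)));
       [exact (is_series_scal _ _ _ (is_series_geom _ Hq)) |]].
  - intros n; unfold scal; simpl; unfold mult; simpl.
    rewrite pow_inv; simpl; field.
    split; [apply pow_nonzero |]; lra.
  - unfold scal; simpl; unfold mult; simpl; field; lra.
Qed.

Lemma is_beta_expansion_const (beta : R) (m d : nat) : 1 < beta -> (d <= m)%nat ->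
  is_beta_expansion beta m (INR d / (beta - 1)) (fun _ => d).
Proof. split; [easy | now apply is_series_const_digits]. Qed.

Lemma is_beta_expansion_bounds (beta : R) (m : nat) (y : R) (eps : nat -> nat) :
  1 < beta -> is_beta_expansion beta m y eps -> 0 <= y <= INR m / (beta - 1).
Proof.
  intros Hbeta [Hdig Hy].
  assert (Hterm : forall i, 0 <= INR (eps i) / beta ^ (S i) <= INR m / beta ^ (S i)).
  { intros i; assert (0 < beta ^ (S i)) by (apply pow_lt; lra).
    split; [apply Rdiv_le_0_compat; [apply pos_INR | lra] |].
    apply Rmult_le_compat_r; [left; apply Rinv_0_lt_compat; lra | apply le_INR, Hdig]. }
  rewrite <- (is_series_unique _ _ Hy).
  split.
  - rewrite <- (Rmult_0_l (Series (fun i => INR (eps i) / beta ^ (S i)))).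
    rewrite <- Series_scal_l.
    apply Series_le; [| now exists y].
    intros i; rewrite Rmult_0_l; specialize (Hterm i); lra.
  - rewrite <- (is_series_unique _ _ (is_series_const_digits beta (INR m) Hbeta)).
    apply Series_le; [exact Hterm |].
    eexists; exact (is_series_const_digits beta (INR m) Hbeta).
Qed.

Lemma is_beta_expansion_shift (beta : R) (m : nat) (y : R) (eps : nat -> nat) :
  beta <> 0 -> is_beta_expansion beta m y eps ->
  is_beta_expansion beta m (beta * y - INR (eps O)) (fun i => eps (S i)).
Proof.
  intros Hbeta [Hdig Hy]; split; [intros i; apply Hdig |].
  set (a := fun i => INR (eps i) / beta ^ (S i)) in Hy.
  assert (Htail : is_series (fun i => a (S i)) (y - a O)).
  { apply is_series_incr_1.
    replace (plus _ _) with y; [exact Hy | unfold plus; simpl; ring]. }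
  apply (is_series_scal beta) in Htail.
  replace (beta * y - INR (eps O)) with (scal beta (y - a O))
    by (unfold scal, a; simpl; unfold mult; simpl; field; exact Hbeta).
  eapply is_series_ext; [| exact Htail].
  intros i; unfold scal, a; simpl; unfold mult; simpl; field.
  split; [apply pow_nonzero |]; exact Hbeta.
Qed.

Section ConstantExpansion.

Variables (k : nat) (beta : R).
Hypothesis Hbeta : INR k + 1 < beta.

Let x := INR k / (beta - 1).

Let beta_gt_1 : 1 < beta.
Proof. pose proof (pos_INR k); lra. Qed.

Let beta_neq_0 : beta <> 0.
Proof. pose proof beta_gt_1; lra. Qed.

Lemma const_point_lt_1 : x < 1.
Proof.
  apply (Rmult_lt_reg_r (beta - 1)); [lra |].
  unfold x, Rdiv; rewrite Rmult_assoc, Rinv_l; lra.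
Qed.

Lemma first_digit_const (eps : nat -> nat) :
  is_beta_expansion beta (2 * k) x eps -> eps O = k.
Proof.
  intros Heps.
  pose proof (is_beta_expansion_bounds _ _ _ _ beta_gt_1
                (is_beta_expansion_shift _ _ _ _ beta_neq_0 Heps)) as [Hlo Hhi].
  assert (Hrem : beta * x - INR (eps O) = x + INR k - INR (eps O))
    by (unfold x; field; lra).
  assert (Hmax : INR (2 * k) / (beta - 1) = 2 * x)
    by (unfold x; rewrite mult_INR; simpl; field; lra).
  rewrite Hrem in Hlo, Hhi; rewrite Hmax in Hhi.
  pose proof const_point_lt_1.
  destruct (Compare_dec.lt_eq_lt_dec (eps O) k) as [[Hlt | Heq] | Hgt]; [| exact Heq |].
  - apply le_INR in Hlt; rewrite S_INR in Hlt; lra.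
  - apply le_INR in Hgt; rewrite S_INR in Hgt; lra.
Qed.

Lemma beta_expansion_const_unique (eps : nat -> nat) :
  is_beta_expansion beta (2 * k) x eps -> forall i, eps i = k.
Proof.
  intros Heps i; revert eps Heps; induction i as [| i IH]; intros eps Heps.
  - exact (first_digit_const eps Heps).
  - apply (IH (fun j => eps (S j))).
    replace x with (beta * x - INR (eps O))
      by (rewrite (first_digit_const eps Heps); unfold x; field; lra).
    exact (is_beta_expansion_shift _ _ _ _ beta_neq_0 Heps).
Qed.

End ConstantExpansion.

Theorem proposition3p2 (k : nat) (beta : R) :
  let m := (2 * k)%nat in
  INR k + 1 < beta <= INR m + 1 ->
  exists x : R, 0 < x < INR m / (beta - 1) /\ unique_expansion beta m x.
Proof.
  intros m [Hbeta Hbeta_le].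
  assert (Hk : 0 < INR k).
  { destruct k as [| k']; [unfold m in Hbeta_le; simpl in *; lra |].
    apply lt_0_INR; lia. }
  exists (INR k / (beta - 1)); split.
  - split; [apply Rdiv_lt_0_compat; lra |].
    unfold m; rewrite mult_INR; simpl.
    apply Rmult_lt_compat_r; [apply Rinv_0_lt_compat |]; lra.
  - exists (fun _ => k); split.
    + apply is_beta_expansion_const; [lra | unfold m; lia].
    + exact (beta_expansion_const_unique k beta Hbeta).
Qed.
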